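(* Let $G$ be a Borel groupoid. If there is a proper Borel $G$-space $X$ such that the moment map $r_X:X\to G^{(0)}$ is Borel amenable ($G$-amenable), then $G$ is Borel amenable.
   Context: All Borel spaces are analytic. A Borel $G$-space $X$ has a Borel moment map $r_X:X\to G^{(0)}$ and Borel action $\gamma\cdot x$ defined when $s(\gamma)=r_X(x)$; $G$ acts on $G^{(0)}$ by $\gamma\cdot s(\gamma)=r(\gamma)$. For a Borel surjection $\pi:X\to Y$, a $\pi$-system is a family $\{m^y\}$ of measures with $m^y$ supported in $\pi^{-1}(y)$ and $y\mapsto\int f\,dm^y$ Borel for all nonnegative Borel $f$. A surjective Borel $G$-map $\pi$ is $G$-properly amenable if there is a $\pi$-system of probability measures with $\gamma\cdot m^y=m^{\gamma\cdot y}$, and $G$-amenable if there is a sequence of $\pi$-systems $m_n$ of probability measures with $\|\gamma\cdot m_n^y-m_n^{\gamma\cdot y}\|_1\to0$ for all composable $\gamma,y$ (total variation norm; $(\gamma\cdot m)(E)=m(\gamma^{-1}E)$). $X$ is a proper $G$-space if the projection $X*G\to X$, $X*G=\{(x,\gamma):r_X(x)=r(\gamma)\}$ with diagonal action, is $G$-properly amenable. $G$ is Borel amenable if $r:G\to G^{(0)}$ is $G$-amenable. *)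

From HB Require Import structures.
From mathcomp Require Import all_boot all_order all_algebra.
From mathcomp Require Import all_classical all_reals all_analysis.
From mathcomp Require Import measurable_realfun.
Set Implicit Arguments. Unset Strict Implicit. Unset Printing Implicit Defensive.
Import Order.TTheory GRing.Theory Num.Theory.
Local Open Scope classical_set_scope.
Local Open Scope ring_scope.

(* Analytic Borel spaces: Borel isomorphic to an analytic subset of R  *)
Section Analytic.
Context (R : realType).

Definition analytic_set (A : set R) : Prop :=
  exists B : set (R * R)%type, measurable B /\ A = fst @` B.

Definition analytic_space {d} (T : measurableType d) : Prop :=
  exists f : T -> R,
    [/\ injective f, measurable_fun setT f, analytic_set (range f) &
        forall E : set T, measurable E ->
          exists B : set R, measurable B /\ f @` E = range f `&` B].
End Analytic.

(* Borel groupoids.  The unit space is a separate Borel space G0,      *)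
(* embedded in G by [gunit].                                           *)
Record borel_groupoid {dG d0} (G : measurableType dG) (G0 : measurableType d0) :=
  BorelGroupoid {
  gunit : G0 -> G;
  grg : G -> G0;
  gsr : G -> G0;
  gmul : G -> G -> G;
  ginv : G -> G;
  grg_unit : forall u, grg (gunit u) = u;
  gsr_unit : forall u, gsr (gunit u) = u;
  grg_mul : forall g h, gsr g = grg h -> grg (gmul g h) = grg g;
  gsr_mul : forall g h, gsr g = grg h -> gsr (gmul g h) = gsr h;
  gmulA : forall g h k, gsr g = grg h -> gsr h = grg k ->
            gmul (gmul g h) k = gmul g (gmul h k);
  gmul1g : forall g, gmul (gunit (grg g)) g = g;
  gmulg1 : forall g, gmul g (gunit (gsr g)) = g;
  grg_inv : forall g, grg (ginv g) = gsr g;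
  gsr_inv : forall g, gsr (ginv g) = grg g;
  gmulgV : forall g, gmul g (ginv g) = gunit (grg g);
  gmulVg : forall g, gmul (ginv g) g = gunit (gsr g);
  gunit_meas : measurable_fun setT gunit;
  grg_meas : measurable_fun setT grg;
  gsr_meas : measurable_fun setT gsr;
  ginv_meas : measurable_fun setT ginv;
  gmul_meas : measurable_fun [set p : (G * G)%type | gsr p.1 = grg p.2]
                (fun p => gmul p.1 p.2)
}.

Section GSpaces.
Context {dG d0} {G : measurableType dG} {G0 : measurableType d0}
  (GG : borel_groupoid G G0).

Record borel_Gspace {dX} (X : measurableType dX) := BorelGSpace {
  gs_mom : X -> G0;
  gs_act : G -> X -> X;
  gs_mom_act : forall g x, gsr GG g = gs_mom x ->
                 gs_mom (gs_act g x) = grg GG g;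
  gs_act1 : forall x, gs_act (gunit GG (gs_mom x)) x = x;
  gs_actM : forall g h x, gsr GG g = grg GG h -> gsr GG h = gs_mom x ->
              gs_act (gmul GG g h) x = gs_act g (gs_act h x);
  gs_mom_meas : measurable_fun setT gs_mom;
  gs_act_meas : measurable_fun [set p : (G * X)%type | gsr GG p.1 = gs_mom p.2]
                  (fun p => gs_act p.1 p.2)
}.

Context (R : realType).
Local Open Scope ereal_scope.

(* In the definitions below a G-space is given by raw data: a Borel space
   Z, a G-invariant carrier set D : set Z (the actual space, so that
   subspaces such as X*G can be handled inside an ambient product; D = setT
   otherwise), a moment map mZ and an action actZ. *)

Definition pi_system {dZ dY} {Z : measurableType dZ} {Y : measurableType dY}
  (D : set Z) (pi : Z -> Y) (m : Y -> {measure set Z -> \bar R}) : Prop :=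
  (forall y (A : set Z), measurable A ->
      A `&` (D `&` pi @^-1` [set y]) = set0 -> m y A = 0) /\
  (forall f : Z -> \bar R, measurable_fun setT f -> (forall z, 0 <= f z) ->
      measurable_fun setT (fun y => \int[m y]_z f z)).

Definition prob_system {dZ dY} {Z : measurableType dZ} {Y : measurableType dY}
  (m : Y -> {measure set Z -> \bar R}) : Prop :=
  forall y, m y setT = 1.

(* (g . m)(E) = m(g^{-1} E) *)
Definition gpush {dZ} {Z : measurableType dZ} (mZ : Z -> G0)
  (actZ : G -> Z -> Z) (g : G) (m : set Z -> \bar R) : set Z -> \bar R :=
  fun E => m [set z | mZ z = gsr GG g /\ E (actZ g z)].

Definition tvnorm {dZ} {Z : measurableType dZ} (mu nu : set Z -> \bar R)
  : \bar R :=
  ereal_sup [set x | exists (n : nat) (F : nat -> set Z),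
     [/\ forall i, measurable (F i), trivIset setT F &
         x = \sum_(i < n) `| mu (F i) - nu (F i) | ] ].

Definition borel_Gmap {dZ dY} {Z : measurableType dZ} {Y : measurableType dY}
  (D : set Z) (mZ : Z -> G0) (actZ : G -> Z -> Z)
  (mY : Y -> G0) (actY : G -> Y -> Y) (pi : Z -> Y) : Prop :=
  [/\ measurable_fun setT pi, pi @` D = setT,
      forall z, D z -> mY (pi z) = mZ z &
      forall g z, D z -> gsr GG g = mZ z -> pi (actZ g z) = actY g (pi z)].

Definition G_properly_amenable {dZ dY} {Z : measurableType dZ}
  {Y : measurableType dY}
  (D : set Z) (mZ : Z -> G0) (actZ : G -> Z -> Z)
  (mY : Y -> G0) (actY : G -> Y -> Y) (pi : Z -> Y) : Prop :=
  borel_Gmap D mZ actZ mY actY pi /\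
  exists m : Y -> {measure set Z -> \bar R},
    [/\ pi_system D pi m, prob_system m &
        forall g y, gsr GG g = mY y -> forall E, measurable E ->
          gpush mZ actZ g (m y) E = m (actY g y) E].

Definition G_amenable {dZ dY} {Z : measurableType dZ} {Y : measurableType dY}
  (D : set Z) (mZ : Z -> G0) (actZ : G -> Z -> Z)
  (mY : Y -> G0) (actY : G -> Y -> Y) (pi : Z -> Y) : Prop :=
  borel_Gmap D mZ actZ mY actY pi /\
  exists m : nat -> Y -> {measure set Z -> \bar R},
    [/\ forall n, pi_system D pi (m n), forall n, prob_system (m n) &
        forall g y, gsr GG g = mY y ->
          (fun n => tvnorm (gpush mZ actZ g (m n y)) (m n (actY g y)))
             @ \oo --> 0].

(* G acting on its unit space: g . s(g) = r(g) *)
Definition unit_act (g : G) (u : G0) : G0 := grg GG g.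

(* X is proper: the projection X*G -> X is G-properly amenable, where
   X*G = {(x,g) | mX x = r g} sits inside X x G, with diagonal action. *)
Definition proper_Gspace {dX} {X : measurableType dX} (XX : borel_Gspace X)
  : Prop :=
  G_properly_amenable
    [set p : (X * G)%type | gs_mom XX p.1 = grg GG p.2]
    (fun p => grg GG p.2)
    (fun h p => (gs_act XX h p.1, gmul GG h p.2))
    (gs_mom XX) (gs_act XX) fst.

Definition borel_amenable : Prop :=
  G_amenable setT (grg GG) (gmul GG) id unit_act (grg GG).

End GSpaces.

(* Let [mu] be the invariant system witnessing that [X] is proper and [m_n] the
   approximately invariant systems on the fibers of the moment map [r_X].
   Averaging the [G]-marginals of the [mu^x] against [m_n^u] gives probability
   measures [nu_n^u] on [r^-1(u)].  Invariance of [mu] turns [g . nu_n^y] into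
   the average of the same marginals against [g . m_n^y], and averaging against
   a Markov kernel does not increase the total variation distance, so
   [|g . nu_n^y - nu_n^(r g)| <= |g . m_n^y - m_n^(r g)|], which tends to 0. *)

From HB Require Import structures.
From mathcomp Require Import all_boot all_order all_algebra.
From mathcomp Require Import all_classical all_reals all_analysis.
From mathcomp Require Import measurable_realfun lra.
Set Implicit Arguments. Unset Strict Implicit. Unset Printing Implicit Defensive.
Import Order.TTheory GRing.Theory Num.Theory.
Local Open Scope classical_set_scope.
Local Open Scope ring_scope.

Lemma measurable_eq_comp_pair (R : realType) {d0 d1 d2} {G0 : measurableType d0}
    {A : measurableType d1} {B : measurableType d2} (e : G0 -> R)
    (a : A -> G0) (b : B -> G0) :
  injective e -> measurable_fun setT e ->
  measurable_fun setT a -> measurable_fun setT b ->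
  measurable [set p : A * B | a p.1 = b p.2].
Proof.
move=> e_inj me ma mb.
have mea : measurable_fun setT (fun p : A * B => e (a p.1)).
  exact: measurableT_comp me (measurableT_comp ma measurable_fst).
have meb : measurable_fun setT (fun p : A * B => e (b p.2)).
  exact: measurableT_comp me (measurableT_comp mb measurable_snd).
have mtrue : measurable [set true] by [].
have := measurable_fun_eqr mea meb measurableT mtrue.
rewrite setTI; congr measurable; apply/seteqP; split => p /=.
  by move/eqP/e_inj.
by move=> ->; apply/eqP.
Qed.

Lemma measurable_section_preimage {dA dB dC} {A : measurableType dA}
    {B : measurableType dB} {C : measurableType dC} (D : set (A * B))
    (f : A * B -> C) (a : A) (E : set C) :
  measurable D -> measurable_fun D f -> measurable E ->
  measurable [set x : B | D (a, x) /\ E (f (a, x))].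
Proof.
move=> mD mf mE.
have := measurable_fun_pair (measurable_cst a) (@measurable_id _ B setT)
  measurableT (mf mD E mE).
by rewrite setTI.
Qed.

Section finite_measure_of.
Context (R : realType) d (T : measurableType d) (mu : {measure set T -> \bar R}).

Definition finite_measure_of of (mu setT < +oo)%E : set T -> \bar R := mu.

Variable mu_fin : (mu setT < +oo)%E.
HB.instance Definition _ := Measure.on (finite_measure_of mu_fin).
HB.instance Definition _ := Measure_isFinite.Build _ T R
  (finite_measure_of mu_fin) (lty_fin_num_fun mu_fin).
End finite_measure_of.

Local Open Scope ereal_scope.

Lemma abse_sub_le_add (R : realType) (a b c c' : \bar R) :
  a \is a fin_num -> b \is a fin_num -> c \is a fin_num -> c' \is a fin_num ->
  0 <= c -> 0 <= c' -> a + c' = b + c -> `|a - b| <= c + c'.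
Proof.
move=> fa fb fc fc'.
rewrite -(fineK fa) -(fineK fb) -(fineK fc) -(fineK fc').
move: (fine a) (fine b) (fine c) (fine c') => x y z w.
rewrite !lee_fin -!EFinD => z0 w0 [e].
rewrite ler_norml; apply/andP; split; lra.
Qed.

Lemma tvnorm_ge0 (R : realType) d (T : measurableType d) (mu nu : set T -> \bar R) :
  0 <= tvnorm mu nu.
Proof.
apply: ereal_sup_ubound; exists 0%N, (fun=> set0); split => //.
  by apply/trivIsetP => i j _ _ _; rewrite setI0.
by rewrite big_ord0.
Qed.

Lemma eq_tvnorm (R : realType) d (T : measurableType d) (mu mu' nu : set T -> \bar R) :
  (forall A, measurable A -> mu A = mu' A) -> tvnorm mu nu = tvnorm mu' nu.
Proof.
move=> mu_mu'; rewrite /tvnorm; congr ereal_sup.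
by apply/seteqP; split => _ [k [F [mF tF ->]]]; exists k, F; split => //;
  apply: eq_bigr => i _; rewrite mu_mu'.
Qed.

(* [rho] and [rho'] are the Jordan parts of [al - be]; the two sets of a Hahn
   decomposition form the partition bounding their total mass by [tvnorm]. *)
Lemma finite_measure_jordan_split (R : realType) d (T : measurableType d)
    (al be : {measure set T -> \bar R}) :
  al setT < +oo -> be setT < +oo ->
  exists rho rho' : {measure set T -> \bar R},
    [/\ forall A, measurable A -> al A + rho' A = be A + rho A,
        rho setT < +oo, rho' setT < +oo & rho setT + rho' setT <= tvnorm al be].
Proof.
move=> al_fin be_fin.
pose nu := cadd (charge_of_finite_measure (finite_measure_of al_fin))
  (copp (charge_of_finite_measure (finite_measure_of be_fin))).
have [P [N PN]] := Hahn_decomposition nu.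
have [[mP _] [mN _] _ PIN] := PN.
have jordan_fin (rho : {measure set T -> \bar R}) : fin_num_fun rho ->
    rho setT < +oo.
  by move=> rho_fin; rewrite -ge0_fin_numE ?measure_ge0//; exact: rho_fin.
have rho_fin := jordan_fin _ (@fin_num_measure _ _ _ (jordan_pos PN)).
have rho'_fin := jordan_fin _ (@fin_num_measure _ _ _ (jordan_neg PN)).
exists (jordan_pos PN), (jordan_neg PN); split => //.
  have cross (a b c c' : \bar R) : a \is a fin_num -> b \is a fin_num ->
      c \is a fin_num -> c' \is a fin_num -> a - b = c + (-1)%:E * c' ->
      a + c' = b + c.
    move=> fa fb fc fc'; rewrite -(fineK fa) -(fineK fb) -(fineK fc) -(fineK fc').
    by rewrite -EFinB -EFinM -EFinD => -[e]; rewrite -!EFinD; congr (_%:E); lra.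
  move=> A mA; apply: cross (jordan_decomp PN mA);
    by apply: lty_fin_num_fun.
have rhoE : (jordan_pos PN : {measure set T -> \bar R}) setT = al P - be P.
  have := jordan_posE PN setT.
  by rewrite cjordan_posE /crestr0 mem_set // /crestr setTI; apply.
have rho'E : (jordan_neg PN : {measure set T -> \bar R}) setT = - (al N - be N).
  have := jordan_negE PN setT.
  by rewrite cjordan_negE /crestr0 mem_set // /crestr setTI; apply.
pose F (i : nat) : set T := if i == 0%N then P else if i == 1%N then N else set0.
apply: (@le_trans _ _ (`|al P - be P| + `|al N - be N|)).
  by rewrite rhoE rho'E -[X in _ <= _ + X]abseN; apply: leeD; exact: lee_abs.
apply: ereal_sup_ubound; exists 2%N, F; split.
- by move=> [|[|i]]; rewrite /F /=.
- apply/trivIsetP => i j _ _.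
  case: i => [|[|i]]; case: j => [|[|j]] //= _; rewrite /F /=;
    by [rewrite PIN|rewrite setIC PIN|rewrite setI0|rewrite set0I].
- by rewrite !big_ord_recr big_ord0 /= add0e.
Qed.

Lemma sum_abse_integral_sub_le_tvnorm (R : realType) d (T : measurableType d)
    (al be : {measure set T -> \bar R}) (n : nat) (phi : nat -> T -> \bar R) :
  al setT < +oo -> be setT < +oo ->
  (forall i, measurable_fun setT (phi i)) -> (forall i x, 0 <= phi i x) ->
  (forall x, \sum_(i < n) phi i x <= 1) ->
  \sum_(i < n) `|\int[al]_x phi i x - \int[be]_x phi i x| <= tvnorm al be.
Proof.
move=> al_fin be_fin mphi phi0 phi1.
have [rho [rho' [al_be rho_fin rho'_fin rho_tv]]] :=
  finite_measure_jordan_split al_fin be_fin.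
have int_le_mass (mu : {measure set T -> \bar R}) (f : T -> \bar R) :
    measurable_fun setT f -> (forall x, 0 <= f x <= 1) ->
    \int[mu]_x f x <= mu setT.
  move=> mf f01; rewrite -[leRHS]mul1e -integral_cst//.
  by apply: ge0_le_integral => // x _; have /andP[] := f01 x.
have msum : measurable_fun setT (fun x => \sum_(i < n) phi i x).
  by apply: emeasurable_sum => i; exact: mphi.
have sum01 x : 0 <= \sum_(i < n) phi i x <= 1.
  by rewrite phi1 andbT; apply: sume_ge0 => i _; exact: phi0.
have phi01 (i : 'I_n) x : 0 <= phi i x <= 1.
  rewrite phi0 /=; apply: le_trans (phi1 x); rewrite (bigD1 i) //=.
  by apply: leeDl; apply: sume_ge0 => j _; exact: phi0.
have int_fin (mu : {measure set T -> \bar R}) (i : 'I_n) : mu setT < +oo ->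
    \int[mu]_x phi i x \is a fin_num.
  move=> mu_fin; rewrite ge0_fin_numE; last by apply: integral_ge0.
  exact: le_lt_trans (int_le_mass _ _ (mphi i) (phi01 i)) mu_fin.
have int_al_be (i : 'I_n) : \int[al]_x phi i x + \int[rho']_x phi i x =
    \int[be]_x phi i x + \int[rho]_x phi i x.
  rewrite -!ge0_integral_measure_add //; apply: eq_measure_integral => A mA _.
  exact: etrans (measure_addE _ _ _) (etrans (al_be A mA) (esym (measure_addE _ _ _))).
apply: le_trans rho_tv.
apply: (@le_trans _ _ (\sum_(i < n) (\int[rho]_x phi i x + \int[rho']_x phi i x))).
  apply: lee_sum => i _; apply: abse_sub_le_add; rewrite ?int_fin//.
  - exact: integral_ge0.
  - exact: integral_ge0.
rewrite big_split /= -!ge0_integral_sum//.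
by apply: leeD; exact: int_le_mass.
Qed.

Lemma pi_system_measurable_fun (R : realType) {dZ dY} {Z : measurableType dZ}
    {Y : measurableType dY} (D : set Z) (pi : Z -> Y)
    (m : Y -> {measure set Z -> \bar R}) (A : set Z) :
  pi_system D pi m -> measurable A -> measurable_fun setT (m ^~ A).
Proof.
move=> [_ m_int] mA.
have := m_int (fun z => (\1_A z)%:E) _ _.
have -> : (fun y => \int[m y]_z (\1_A z)%:E) = m ^~ A.
  by apply/funext => y; rewrite integral_indic// setIT.
apply; last by move=> z; rewrite lee_fin.
by apply/measurable_EFinP; exact: measurable_indic.
Qed.

Lemma sum_measure_le_setT (R : realType) d (T : measurableType d)
    (mu : {measure set T -> \bar R}) (n : nat) (F : nat -> set T) :
  (forall i, measurable (F i)) -> trivIset setT F ->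
  \sum_(i < n) mu (F i) <= mu setT.
Proof.
move=> mF tF; have mUF : measurable (\big[setU/set0]_(i < n) F i).
  by apply: bigsetU_measurable => i _.
rewrite -measure_semi_additive_ord//; last first.
  by apply/trivIsetP => i j _ _ ij; move/trivIsetP : tF; exact.
by apply: le_measure; rewrite ?inE.
Qed.

Section prob_kernel_of.
Context (R : realType) d d' (T : measurableType d) (U : measurableType d')
  (k : T -> {measure set U -> \bar R}).

Definition prob_kernel_of
    of (forall A, measurable A -> measurable_fun setT (k ^~ A))
    & (forall t, k t setT = 1) : T -> {measure set U -> \bar R} := k.

Variables (mk : forall A, measurable A -> measurable_fun setT (k ^~ A))
  (k_prob : forall t, k t setT = 1).
HB.instance Definition _ := isKernel.Build _ _ T U R (prob_kernel_of mk k_prob) mk.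
HB.instance Definition _ :=
  Kernel_isProbability.Build _ _ T U R (prob_kernel_of mk k_prob) k_prob.
End prob_kernel_of.

Definition pushforward_measure (R : realType) d d' (T : measurableType d)
    (U : measurableType d') (mu : {measure set T -> \bar R}) (f : T -> U)
    (mf : measurable_fun setT f) : {measure set U -> \bar R} :=
  measure_function_pushforward__canonical__measure_function_Measure mu mf.

Lemma integral_pushforward_measure (R : realType) d d' (T : measurableType d)
    (U : measurableType d') (mu : {measure set T -> \bar R}) (f : T -> U)
    (mf : measurable_fun setT f) (h : U -> \bar R) :
  measurable_fun setT h -> (forall x, 0 <= h x) ->
  \int[pushforward_measure mu mf]_x h x = \int[mu]_x h (f x).
Proof. by move=> mh h0; rewrite (ge0_integral_pushforward mf mu measurableT). Qed.

Lemma pi_system_eq_integral (R : realType) {dZ dY} {Z : measurableType dZ}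
    {Y : measurableType dY} (D : set Z) (pi : Z -> Y)
    (m : Y -> {measure set Z -> \bar R}) (y : Y) (f g : Z -> \bar R) :
  pi_system D pi m -> measurable_fun setT f -> measurable_fun setT g ->
  (forall z, 0 <= f z) -> (forall z, 0 <= g z) ->
  (forall z, D z -> pi z = y -> f z = g z) ->
  \int[m y]_z f z = \int[m y]_z g z.
Proof.
move=> [m_null _] mf mg f0 g0 fg.
have mN := measurable_neqe measurableT mf mg; rewrite setTI in mN.
apply: ge0_ae_eq_integral => //; exists [set z | f z != g z]; split => //.
  apply: m_null mN _; apply/seteqP; split => // z [/eqP + [Dz /= pzy]].
  by apply; exact: fg.
by move=> z /= fgz; apply/eqP => e; exact: fgz.
Qed.

Lemma pi_system_eq_measure (R : realType) {dZ dY} {Z : measurableType dZ}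
    {Y : measurableType dY} (D : set Z) (pi : Z -> Y)
    (m : Y -> {measure set Z -> \bar R}) (y : Y) (A B : set Z) :
  pi_system D pi m -> measurable A -> measurable B ->
  (forall z, D z -> pi z = y -> A z <-> B z) -> m y A = m y B.
Proof.
move=> m_sys mA mB AB; rewrite -(setIT A) -(setIT B).
rewrite -!integral_indic//; apply: pi_system_eq_integral m_sys _ _ _ _ _.
- by apply/measurable_EFinP; exact: measurable_indic.
- by apply/measurable_EFinP; exact: measurable_indic.
- by move=> z; rewrite lee_fin.
- by move=> z; rewrite lee_fin.
move=> z Dz pzy; rewrite !indicE; suff -> : (z \in A) = (z \in B) by [].
by apply/idP/idP => /set_mem/(AB _ Dz pzy)/mem_set.
Qed.

Section proper_average.
Context (R : realType) {dG d0 : measure_display} {G : measurableType dG}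
  {G0 : measurableType d0} (GG : borel_groupoid G G0).

Lemma grg_borel_Gmap :
  borel_Gmap GG setT (grg GG) (gmul GG) id (unit_act GG) (grg GG).
Proof.
split => //.
- exact: grg_meas.
- by apply/seteqP; split => // u _; exists (gunit GG u); rewrite ?grg_unit.
- by move=> g h _ sgh; rewrite /unit_act grg_mul.
Qed.

Hypothesis anG0 : analytic_space R G0.

Lemma measurable_gmul_preimage g E : measurable E ->
  measurable [set h | grg GG h = gsr GG g /\ E (gmul GG g h)].
Proof.
move=> mE; have [e [e_inj me _ _]] := anG0.
have mD := measurable_eq_comp_pair e_inj me (gsr_meas GG) (grg_meas GG).
have := measurable_section_preimage g mD (gmul_meas (b := GG)) mE.
by congr measurable; apply/seteqP; split => h /= [-> Eh].
Qed.

Context {dX : measure_display} {X : measurableType dX} (XX : borel_Gspace GG X).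
Local Notation rX := (gs_mom XX).
Local Notation act := (gs_act XX).

Lemma measurable_act_preimage g F : measurable F ->
  measurable [set x | rX x = gsr GG g /\ F (act g x)].
Proof.
move=> mF; have [e [e_inj me _ _]] := anG0.
have mD := measurable_eq_comp_pair e_inj me (gsr_meas GG) (gs_mom_meas XX).
have := measurable_section_preimage g mD (gs_act_meas (b := XX)) mF.
by congr measurable; apply/seteqP; split => x /= [-> Fx].
Qed.

(* [act_by g] is the action of [g] on the fiber of [gsr GG g], extended by
   the identity elsewhere so as to be a measurable map on all of [X]. *)
Definition act_by g x := if `[< rX x = gsr GG g >] then act g x else x.

Lemma measurable_act_by g : measurable_fun setT (act_by g).
Proof.
move=> _ B mB; rewrite setTI.
have -> : act_by g @^-1` B = [set x | rX x = gsr GG g /\ B (act g x)] `|`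
    (~` [set x | rX x = gsr GG g] `&` B).
  apply/seteqP; split => x; rewrite /act_by /=; case: asboolP => //.
  - by move=> ? ?; left.
  - by move=> ? ?; right.
  - by move=> ? [[]|[]].
  - by move=> nS [[/nS]|[]].
apply: measurableU; first exact: measurable_act_preimage.
apply: measurableI mB; apply: measurableC.
have := measurable_act_preimage g measurableT.
by congr measurable; apply/seteqP; split => [x []|x] //=.
Qed.

Variable mu : X -> {measure set (X * G) -> \bar R}.
Hypothesis mu_sys : pi_system [set p : X * G | rX p.1 = grg GG p.2] fst mu.
Hypothesis mu_prob : prob_system mu.

Let measurable_snd_preimage (E : set G) :
  measurable E -> measurable (@snd X G @^-1` E).
Proof. by move=> mE; rewrite -[X in measurable X]setTI; exact: measurable_snd. Qed.

Definition marginal x : {measure set G -> \bar R} :=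
  pushforward_measure (mu x) measurable_snd.

Lemma marginal_prob x : marginal x setT = 1.
Proof. by rewrite /= /pushforward preimage_setT mu_prob. Qed.

Lemma measurable_marginal E : measurable E -> measurable_fun setT (marginal ^~ E).
Proof.
by move=> mE; exact: pi_system_measurable_fun mu_sys (measurable_snd_preimage mE).
Qed.

Lemma measurable_integral_marginal (f : G -> \bar R) :
  measurable_fun setT f -> (forall h, 0 <= f h) ->
  measurable_fun setT (fun x => \int[marginal x]_h f h).
Proof.
move=> mf f0; under eq_fun => x do rewrite integral_pushforward_measure//.
by apply: mu_sys.2 => [|p]; [exact: measurableT_comp mf measurable_snd|exact: f0].
Qed.

Lemma marginal_null x E : measurable E ->
  E `&` grg GG @^-1` [set rX x] = set0 -> marginal x E = 0.
Proof.
move=> mE E0; apply: mu_sys.1 (measurable_snd_preimage mE) _.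
apply/seteqP; split => // -[x' h] [/= Eh [/= rxh xx']].
have : (E `&` grg GG @^-1` [set rX x]) h by split => //=; rewrite -rxh xx'.
by rewrite E0.
Qed.

Hypothesis mu_equi : forall g x, gsr GG g = rX x -> forall E, measurable E ->
  gpush GG (fun p : X * G => grg GG p.2) (fun h p => (act h p.1, gmul GG h p.2))
    g (mu x) E = mu (act g x) E.

Lemma marginal_translate g x E : gsr GG g = rX x -> measurable E ->
  marginal x [set h | grg GG h = gsr GG g /\ E (gmul GG g h)] =
  marginal (act g x) E.
Proof. by move=> sgx mE; exact: (mu_equi sgx (measurable_snd_preimage mE)). Qed.

Variable m : G0 -> {measure set X -> \bar R}.
Hypothesis m_sys : pi_system setT rX m.
Hypothesis m_prob : prob_system m.

Definition average : G0 -> {measure set G -> \bar R} :=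
  mkcomp (prob_kernel_of (fun A mA => pi_system_measurable_fun m_sys mA) m_prob)
    (prob_kernel_of
       (fun E mE => measurableT_comp (measurable_marginal mE) measurable_snd)
       (fun p : G0 * X => marginal_prob p.2)).

Lemma averageE u E : average u E = \int[m u]_x marginal x E.
Proof. by []. Qed.

Lemma integral_average u (f : G -> \bar R) :
  measurable_fun setT f -> (forall h, 0 <= f h) ->
  \int[average u]_h f h = \int[m u]_x \int[marginal x]_h f h.
Proof. by move=> mf f0; rewrite /average /mkcomp integral_kcomp. Qed.

Lemma average_pi_system : pi_system setT (grg GG) average.
Proof.
split=> [y A mA|f mf f0].
  rewrite setTI averageE => A0.
  rewrite -[RHS](integral0 (m y) setT).
  apply: pi_system_eq_integral m_sys _ _ _ _ _ => //.
  - exact: measurable_marginal.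
  - by move=> x _ rxy; apply: marginal_null => //; rewrite rxy.
under eq_fun => u do rewrite integral_average//.
apply: m_sys.2 => [|x]; first exact: measurable_integral_marginal.
exact: integral_ge0.
Qed.

Lemma average_prob : prob_system average.
Proof.
move=> u; rewrite averageE.
under eq_integral => x _ do rewrite marginal_prob.
by rewrite integral_cst// mul1e m_prob.
Qed.

Lemma gpush_act_by g y F : gsr GG g = y -> measurable F ->
  gpush GG rX act g (m y) F = pushforward_measure (m y) (measurable_act_by g) F.
Proof.
move=> sgy mF; apply: pi_system_eq_measure m_sys _ _ _.
- exact: measurable_act_preimage.
- by have := measurable_act_by g measurableT mF; rewrite setTI.
- by move=> x _ rxy; rewrite /= /act_by asboolT ?rxy//; split=> [[]|].
Qed.

Lemma gpush_average g y E : gsr GG g = y -> measurable E ->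
  gpush GG (grg GG) (gmul GG) g (average y) E =
  \int[pushforward_measure (m y) (measurable_act_by g)]_x marginal x E.
Proof.
move=> sgy mE; rewrite integral_pushforward_measure//; last first.
  exact: measurable_marginal.
apply: pi_system_eq_integral m_sys _ _ _ _ _ => //.
- exact/measurable_marginal/measurable_gmul_preimage.
- exact: measurableT_comp (measurable_marginal mE) (measurable_act_by g).
- move=> x _ rxy; rewrite /act_by asboolT ?rxy//.
  by apply: marginal_translate => //; rewrite sgy rxy.
Qed.

Lemma tvnorm_gpush_average_le g y : gsr GG g = y ->
  tvnorm (gpush GG (grg GG) (gmul GG) g (average y)) (average (grg GG g)) <=
  tvnorm (gpush GG rX act g (m y)) (m (grg GG g)).
Proof.
move=> sgy; rewrite (eq_tvnorm _ (fun F => gpush_act_by (F := F) sgy)).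
apply: ge_ereal_sup => _ [n [F [mF tF ->]]].
under eq_bigr => i _ do rewrite gpush_average// averageE.
apply: (sum_abse_integral_sub_le_tvnorm (phi := fun i x => marginal x (F i))) => //.
- by rewrite /= /pushforward preimage_setT m_prob ltry.
- by rewrite m_prob ltry.
- by move=> i; exact: measurable_marginal.
- by move=> x; rewrite -(marginal_prob x); exact: sum_measure_le_setT.
Qed.

End proper_average.

Unset Implicit Arguments.
Theorem lemma2p7 (R : realType) (dG d0 dX : measure_display)
  (G : measurableType dG) (G0 : measurableType d0) (X : measurableType dX)
  (GG : borel_groupoid G G0)
  (anG : analytic_space R G) (anG0 : analytic_space R G0)
  (anX : analytic_space R X)
  (XX : borel_Gspace GG X)
  (Xproper : proper_Gspace R XX)
  (rXam : G_amenable GG R setT (gs_mom XX) (gs_act XX) id (unit_act GG)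
            (gs_mom XX)) :
  borel_amenable GG R.
Proof.
have [_ [mu [mu_sys mu_prob mu_equi]]] := Xproper.
have [_ [m [m_sys m_prob m_conv]]] := rXam.
split; first exact: grg_borel_Gmap.
exists (fun n => average mu_sys mu_prob (m_sys n) (m_prob n)).
split=> [n|n|g y sgy].
- exact: average_pi_system.
- exact: average_prob.
apply: (squeeze_cvge _ (cvg_cst 0) (m_conv g y sgy)); apply: nearW => n.
rewrite tvnorm_ge0 andTb.
exact (tvnorm_gpush_average_le anG0 mu_sys mu_prob mu_equi (m_sys n) (m_prob n) sgy).
Qed.
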